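(* Let $n=p$ be prime, let $v\in\mathbb{R}^p$ have pairwise distinct coordinates, and let $C$ be the elementary symmetric curve associated to $v$. Let $\zeta=e^{2\pi i/p}$ and $w=(\zeta,\zeta^2,\dots,\zeta^p)$. Then the complex linear span of any irreducible component $C_0$ of $C$ contains $\sigma w$ for some $\sigma\in S_p$.
   Context: For $v=(c_1,\dots,c_n)$, the elementary symmetric curve associated to $v$ is the complex algebraic variety $C$ (in $\mathbb{C}^n$, viewed inside $\mathbb{P}^n_{\mathbb{C}}$) cut out by $e_k(x_1,\dots,x_n)=e_k(c_1,\dots,c_n)$ for $k=1,\dots,n-1$, where $e_k$ is the $k$-th elementary symmetric polynomial. $S_p$ acts on $\mathbb{C}^p$ by permuting coordinates: for $\epsilon\in S_p$, the $j$-th coordinate of $\epsilon x$ is $x_{\epsilon^{-1}(j)}$. *)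

From mathcomp Require Import all_boot all_order all_algebra all_fingroup.
From mathcomp Require Import reals trigo.
From mathcomp Require Import complex.
From mathcomp Require mpoly.
Set Implicit Arguments. Unset Strict Implicit. Unset Printing Implicit Defensive.
Import GRing.Theory Num.Theory.
Local Open Scope ring_scope.
Local Open Scope complex_scope.

Definition zclosed (R : realType) (p : nat) (S : ('I_p -> R[i]) -> Prop) : Prop :=
  exists F : mpoly.mpoly p R[i] -> Prop,
    forall x, S x <-> (forall f, F f -> mpoly.meval x f = 0).

Definition zirreducible (R : realType) (p : nat) (S : ('I_p -> R[i]) -> Prop) : Prop :=
  (exists x, S x) /\
  forall A B : ('I_p -> R[i]) -> Prop, zclosed A -> zclosed B ->
    (forall x, S x -> A x \/ B x) ->
    (forall x, S x -> A x) \/ (forall x, S x -> B x).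

Definition irr_component (R : realType) (p : nat)
    (X S : ('I_p -> R[i]) -> Prop) : Prop :=
  [/\ zclosed S, zirreducible S, (forall x, S x -> X x) &
      forall T, zclosed T -> zirreducible T -> (forall x, T x -> X x) ->
        (forall x, S x -> T x) -> forall x, T x -> S x].

Definition elem_sym_curve (R : realType) (p : nat) (v : 'I_p -> R)
    (x : 'I_p -> R[i]) : Prop :=
  forall k : nat, (1 <= k <= p.-1)%N ->
    mpoly.meval x (mpoly.mesym p R[i] k)
    = mpoly.meval (fun i => (v i)%:C) (mpoly.mesym p R[i] k).

Definition in_cspan (R : realType) (p : nat) (S : ('I_p -> R[i]) -> Prop)
    (u : 'I_p -> R[i]) : Prop :=
  exists (m : nat) (y : 'I_m -> ('I_p -> R[i])) (c : 'I_m -> R[i]),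
    (forall l, S (y l)) /\ forall j, u j = \sum_(l < m) c l * y l j.

Definition zeta (R : realType) (p : nat) : R[i] :=
  cos (2 * pi / p%:R) +i* sin (2 * pi / p%:R).

(* w = (zeta, zeta^2, ..., zeta^p); index j : 'I_p stands for coordinate j+1. *)
Definition wvec (R : realType) (p : nat) : 'I_p -> R[i] :=
  fun j => zeta R p ^+ j.+1.

Definition perm_act (T : Type) (p : nat) (s : 'S_p) (x : 'I_p -> T) : 'I_p -> T :=
  fun j => x ((s^-1)%g j).
Arguments zeta : clear implicits.
Arguments wvec : clear implicits.

(* Write e_k for the elementary symmetric functions and C for the curve e_k = e_k(v),
   k < p.  Two points of C with the same e_p are permutations of each other, so C is the
   union of the S_p-orbits lying over the values of e_p, and every value is attained.

   Every irreducible component C0 of C meets infinitely many of these fibres.  Otherwise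
   irreducibility forces C0 to be a single point x0; but some irreducible closed subset of C
   meets infinitely many fibres, hence every fibre, and a permutation moves it through x0,
   contradicting the maximality of C0.  Such a subset is found without any Noetherian
   argument: among closed subsets Y of C meeting infinitely many fibres and polynomials g
   vanishing on Y, minimise the number of points of a generic orbit at which g vanishes; the
   closure of the generic part of Y is then irreducible.

   Suppose no sigma w lies in the span of C0 and take a linear form l vanishing on C0 but at
   no sigma w.  The product of l over an S_p-orbit is symmetric, hence on C a polynomial in
   e_p; it has infinitely many roots, so l vanishes somewhere on every orbit of C.  As l is
   homogeneous the same holds on the scaled curves e_k = u^k e_k(v), and since this is a
   polynomial condition in u it persists at u = 0, i.e. on the curve e_1 = ... = e_(p-1) = 0,
   which contains w because the zeta^j are the p-th roots of unity. *)

From mathcomp Require Import all_boot all_order all_algebra all_fingroup.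
From mathcomp Require Import boolp reals trigo complex mpoly zify ring lra.
Set Implicit Arguments. Unset Strict Implicit. Unset Printing Implicit Defensive.
Import Order.TTheory GRing.Theory Num.Theory.
Local Open Scope ring_scope.

Lemma exists_notin (K : numDomainType) (s : seq K) : exists a : K, a \notin s.
Proof.
pose L := [seq (i%:R : K) | i <- iota 0 (size s).+1].
have uL : uniq L by rewrite map_inj_uniq ?iota_uniq // => i j /eqP; rewrite eqr_nat => /eqP.
have /allPn[a _ a_s] : ~~ all (mem s) L.
  apply/negP => /allP sub; have := uniq_leq_size uL sub.
  by rewrite size_map size_iota ltnn.
by exists a.
Qed.

Section Roots.
Variable K : closedFieldType.

Lemma poly_finite_roots (q : {poly K}) : q != 0 ->
  exists rs : seq K, forall u, u \notin rs -> q.[u] != 0.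
Proof.
move=> q0; have [r ->] := closed_field_poly_normal q; exists r => u ur.
rewrite hornerZ horner_prod mulf_neq0 ?lead_coef_eq0 // prodf_seq_neq0.
by apply/allP => z zr; rewrite hornerXsubC subr_eq0; apply: contraNneq ur => ->.
Qed.

Lemma poly_eq0_of_roots (q : {poly K}) :
  (forall rs : seq K, exists2 u, u \notin rs & q.[u] = 0) -> q = 0.
Proof.
move=> roots; apply: contraPeq (roots) => /poly_finite_roots[rs rsP] /(_ rs)[u].
by move/rsP/eqP.
Qed.

End Roots.

Section PermutationAction.
Variables (T : Type) (n : nat).
Implicit Types (x : 'I_n -> T) (s t : 'S_n).

Lemma perm_act1 x : perm_act 1 x = x.
Proof. by apply: funext => j; rewrite /perm_act invg1 perm1. Qed.

Lemma perm_actM s t x : perm_act s (perm_act t x) = perm_act (t * s)%g x.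
Proof. by apply: funext => j; rewrite /perm_act invMg permM. Qed.

Lemma perm_actK s : cancel (@perm_act T n s) (perm_act (s^-1)%g).
Proof. by move=> x; rewrite perm_actM mulgV perm_act1. Qed.

Lemma perm_actVK s : cancel (@perm_act T n (s^-1)%g) (perm_act s).
Proof. by move=> x; rewrite perm_actM mulVg perm_act1. Qed.

End PermutationAction.

Lemma meval_perm_act (K : comNzRingType) n (s : 'S_n) (x : 'I_n -> K) (g : {mpoly K[n]}) :
  meval (perm_act s x) g = meval x (msym (s^-1)%g g).
Proof.
have -> : msym (s^-1)%g g = g \mPo [tuple 'X_((s^-1)%g i) | i < n].
  by rewrite /msym /comp_mpoly; congr mmap; apply: funext => i; rewrite tnth_mktuple.
by rewrite comp_mpoly_meval; apply: meval_eq => i; rewrite tnth_mktuple mevalXU.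
Qed.

Section ElementarySymmetric.
Variables (K : numClosedFieldType) (n : nat).
Implicit Types (c x y : 'I_n -> K) (s : 'S_n).

Definition elem_sym k x := meval x (mesym n K k).

Lemma elem_sym0 x : elem_sym 0 x = 1.
Proof. by rewrite /elem_sym mesym0E meval1. Qed.

Lemma elem_sym_perm_act k s x : elem_sym k (perm_act s x) = elem_sym k x.
Proof. by rewrite /elem_sym meval_perm_act (issymP _ (mesym_sym n K k)). Qed.

Lemma symmetric_meval_elem_sym q : q \is symmetric ->
  exists t : {mpoly K[n]}, forall x, meval x q = meval (fun i : 'I_n => elem_sym i.+1 x) t.
Proof.
case/sym_fundamental => t [tq _]; exists t => x.
by rewrite -tq comp_mpoly_meval; apply: meval_eq => i; rewrite tnth_mktuple.
Qed.

Definition root_poly x : {poly K} := \prod_(a <- [tuple x i | i < n]) ('X - a%:P).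

Lemma coef_root_poly x k : (k <= n)%N ->
  (root_poly x)`_(n - k) = (-1) ^+ k * elem_sym k x.
Proof.
move=> kn; have := mroots_coeff [tuple x i | i < n] (inord k).
rewrite inordK ?ltnS // => ->.
by congr (_ * _); apply: meval_eq => i; rewrite tnth_mktuple.
Qed.

Lemma perm_act_of_elem_sym x y : (forall k, (1 <= k <= n)%N -> elem_sym k x = elem_sym k y) ->
  exists s, y = perm_act s x.
Proof.
move=> exy; suff : root_poly y = root_poly x.
  case/prod_XsubC_eq/tuple_permP => s ys; exists (s^-1)%g; apply: funext => j.
  have := congr1 (nth 0 ^~ j) ys; rewrite /perm_act invgK /=.
  by rewrite !(nth_map j) -?enumT ?size_enum_ord // nth_ord_enum !tnth_mktuple.
apply/polyP => j; case: (leqP j n) => jn; last first.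
  by rewrite !nth_default // /root_poly size_prod_XsubC size_tuple.
rewrite -(subKn jn) !coef_root_poly ?leq_subr //.
by case: (n - j)%N (leq_subr j n) => [_|k kn]; rewrite ?elem_sym0 ?exy.
Qed.

Lemma exists_elem_sym (a : nat -> K) :
  exists x, forall k, (1 <= k <= n)%N -> elem_sym k x = a k.
Proof.
pose b k := (-1) ^+ k * (if k == 0%N then 1 else a k).
pose q := \poly_(i < n.+1) b (n - i)%N.
have q_monic : lead_coef q = 1.
  by rewrite lead_coef_poly //= subnn /b expr0 mul1r ?oner_neq0.
have [r qr] := closed_field_poly_normal q; rewrite q_monic scale1r in qr.
have size_r : size r == n.
  have := size_prod_XsubC r (fun z => z); rewrite -qr size_poly_eq; first by case=> ->.
  by rewrite /= subnn /b mul1r oner_neq0.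
exists (tnth (Tuple size_r)) => k /andP[k_gt0 kn].
have : (root_poly (tnth (Tuple size_r)))`_(n - k) = b k.
  have -> : root_poly (tnth (Tuple size_r)) = q.
    by rewrite qr /root_poly; congr (\prod_(_ <- _) _); apply: (map_tnth_enum (Tuple size_r)).
  by rewrite coef_poly ltnS leq_subr subKn.
rewrite coef_root_poly // /b (gtn_eqF k_gt0) => /mulrI; apply.
by rewrite unitrX ?unitrN1.
Qed.

Definition sym_curve c x := forall k, (1 <= k <= n.-1)%N -> elem_sym k x = elem_sym k c.

Definition on_curve c (Y : ('I_n -> K) -> Prop) := forall y, Y y -> sym_curve c y.

Lemma sym_curve_perm_act c s x : sym_curve c (perm_act s x) -> sym_curve c x.
Proof. by move=> xc k kn; rewrite -(elem_sym_perm_act k s x) xc. Qed.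

Lemma exists_sym_curve_en c mu : (0 < n)%N -> exists2 x, sym_curve c x & elem_sym n x = mu.
Proof.
move=> n_gt0; have [x xP] := exists_elem_sym (fun k => if k == n then mu else elem_sym k c).
exists x => [k /andP[k_gt0 kn] | ]; last by rewrite xP ?eqxx // n_gt0 leqnn.
have k_lt_n : (k < n)%N by move: kn n_gt0; lia.
by rewrite xP ?(ltn_eqF k_lt_n) // k_gt0 ltnW.
Qed.

Lemma sym_curve_fibre c x y : sym_curve c x -> sym_curve c y ->
  elem_sym n x = elem_sym n y -> exists s, y = perm_act s x.
Proof.
move=> xc yc xy; apply: perm_act_of_elem_sym => k /andP[k_gt0 kn].
have [-> // | k_lt_n] := eqVneq k n.
by rewrite xc ?yc // k_gt0 /=; move: kn k_lt_n; lia.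
Qed.

End ElementarySymmetric.

Section ZeroCount.
Variables (K : idomainType) (I : finType) (a : I -> K).

Let zeros := #|[pred i | a i == 0]|.

Lemma prod_XsubC_zeros :
  \prod_i ('X - (a i)%:P) = 'X^zeros * \prod_(i | a i != 0) ('X - (a i)%:P).
Proof.
rewrite (bigID (fun i => a i == 0)) /= -prodr_const; congr (_ * _).
by apply: eq_bigr => i /eqP ->; rewrite subr0.
Qed.

Lemma coef_prod_XsubC_lt_zeros j : (j < zeros)%N -> (\prod_i ('X - (a i)%:P))`_j = 0.
Proof. by move=> j_lt; rewrite prod_XsubC_zeros coefXnM j_lt. Qed.

Lemma coef_prod_XsubC_zeros : (\prod_i ('X - (a i)%:P))`_zeros != 0.
Proof.
rewrite prod_XsubC_zeros coefXnM ltnn subnn -horner_coef0 horner_prod.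
by apply/prodf_neq0 => i ai; rewrite hornerXsubC sub0r oppr_eq0.
Qed.

End ZeroCount.

Lemma exists_poly_meval_horner (K : comNzRingType) n (q : {mpoly K[n]})
    (P : 'I_n -> {poly K}) :
  exists Q : {poly K}, forall u, Q.[u] = meval (fun i => (P i).[u]) q.
Proof.
exists (\sum_(m <- msupp q) q@_m *: \prod_i P i ^+ m i) => u.
rewrite mevalE horner_sum; apply: eq_bigr => m _; rewrite hornerZ horner_prod.
by congr (_ * _); apply: eq_bigr => i _; rewrite horner_exp.
Qed.

Section OrbitPolynomial.
Variables (K : numClosedFieldType) (n : nat).
Implicit Types (c x y : 'I_n -> K) (g h : {mpoly K[n]}) (s t : 'S_n).

Definition orbit_poly g x : {poly K} :=
  \prod_(t : 'S_n) ('X - (meval (perm_act t x) g)%:P).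

Definition orbit_zeros g x := #|[pred t : 'S_n | meval (perm_act t x) g == 0]|.

Lemma coef_orbit_poly_elem_sym g j : exists q : {mpoly K[n]}, forall x,
  (orbit_poly g x)`_j = meval (fun i : 'I_n => elem_sym i.+1 x) q.
Proof.
pose P : {poly {mpoly K[n]}} := \prod_(t : 'S_n) ('X - (msym t g)%:P).
have /symmetric_meval_elem_sym[q qP] : P`_j \is symmetric.
  apply/issymP => s; rewrite -coef_map /P map_prod_XsubC [in RHS](reindex_inj (mulIg s)).
  apply: (congr1 (fun p : {poly {mpoly K[n]}} => p`_j)); apply: eq_bigr => t _.
  by rewrite [in RHS]msymMm.
exists q => x; rewrite -qP -coef_map /P map_prod_XsubC (reindex_inj invg_inj).
apply: (congr1 (fun p : {poly K} => p`_j)); apply: eq_bigr => t _.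
by rewrite meval_perm_act.
Qed.

Lemma coef_orbit_poly_zeros g x : (orbit_poly g x)`_(orbit_zeros g x) != 0.
Proof. exact: coef_prod_XsubC_zeros. Qed.

Lemma coef_orbit_poly_lt_zeros g x j : (j < orbit_zeros g x)%N -> (orbit_poly g x)`_j = 0.
Proof. exact: coef_prod_XsubC_lt_zeros. Qed.

Lemma coef0_orbit_poly_eq0 g x : ((orbit_poly g x)`_0 == 0) = (0 < orbit_zeros g x)%N.
Proof.
have [z0 | z_gt0] := posnP (orbit_zeros g x); last by rewrite coef_orbit_poly_lt_zeros ?eqxx.
by have := coef_orbit_poly_zeros g x; rewrite z0 => /negPf ->.
Qed.

Lemma coef_orbit_poly_curve c g j : exists Q : {poly K}, forall y, sym_curve c y ->
  (orbit_poly g y)`_j = Q.[elem_sym n y].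
Proof.
have [q qP] := coef_orbit_poly_elem_sym g j.
pose P (i : 'I_n) : {poly K} := if i.+1 == n then 'X else (elem_sym i.+1 c)%:P.
have [Q QP] := exists_poly_meval_horner q P.
exists Q => y yc; rewrite qP QP; apply: meval_eq => i; rewrite /P.
case: eqP => [-> | ne]; first by rewrite hornerX.
by rewrite hornerC yc //; have := ltn_ord i; lia.
Qed.

Definition generic_zeros c g r :=
  (forall x, sym_curve c x -> (r <= orbit_zeros g x)%N) /\
  exists E : seq K, forall x, sym_curve c x -> elem_sym n x \notin E -> orbit_zeros g x = r.

Lemma exists_generic_zeros c g : exists r, generic_zeros c g r.
Proof.
have /choice[Q QP] := coef_orbit_poly_curve c g.
have Q_neq0 x : sym_curve c x -> Q (orbit_zeros g x) != 0.
  by move=> xc; apply: contra_neq (coef_orbit_poly_zeros g x) => Q0; rewrite QP // Q0 horner0.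
have [|r Qr r_min] := ex_minnP (ex_intro (fun j => Q j != 0) _ (Q_neq0 c _)) => //.
have [E EP] := poly_finite_roots Qr.
exists r; split => [x xc | ]; first exact/r_min/Q_neq0.
exists E => x xc xE; apply/eqP; rewrite eqn_leq r_min ?Q_neq0 // andbT leqNgt.
by apply: contra (EP _ xE) => /coef_orbit_poly_lt_zeros; rewrite QP // => ->.
Qed.

Lemma orbit_zeros_gt0 g x : meval x g = 0 -> (0 < orbit_zeros g x)%N.
Proof. by move=> gx; apply/card_gt0P; exists 1%g; rewrite inE perm_act1 gx. Qed.

Lemma orbit_zeros_perturb g h x t0 :
  meval (perm_act t0 x) g = 0 -> meval (perm_act t0 x) h != 0 ->
  exists a, (orbit_zeros (g + a *: h) x < orbit_zeros g x)%N.
Proof.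
move=> g_t0 h_t0; pose ev f t := meval (perm_act t x) f.
have [a aP] := exists_notin [seq - ev g t / ev h t | t <- enum 'S_n].
have zeros_sub t : ev (g + a *: h) t = 0 -> ev g t = 0 /\ ev h t = 0.
  rewrite /ev mevalD mevalZ -/(ev g t) -/(ev h t).
  have [-> | h_neq0] := eqVneq (ev h t) 0; first by rewrite mulr0 addr0.
  move/eqP; rewrite addrC addr_eq0 => /eqP ah; case/negP: aP; apply/mapP.
  by exists t; rewrite ?mem_enum // -ah mulfK.
exists a; apply: proper_card; apply/properP; split.
  by apply/subsetP => t; rewrite !inE => /eqP /zeros_sub[/eqP].
exists t0; first by rewrite inE /ev g_t0.
by rewrite inE; apply: contraNN h_t0 => /eqP /zeros_sub[_ /eqP].
Qed.

End OrbitPolynomial.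

Section ZariskiTopology.
Variables (K : comNzRingType) (n : nat).
Implicit Types (S Y Z A B : ('I_n -> K) -> Prop) (x y : 'I_n -> K) (f g : {mpoly K[n]}).

Definition zariski_closed S := exists F : {mpoly K[n]} -> Prop,
  forall x, S x <-> (forall f, F f -> meval x f = 0).

Definition zariski_irreducible S := (exists x, S x) /\
  forall A B, zariski_closed A -> zariski_closed B -> (forall x, S x -> A x \/ B x) ->
    (forall x, S x -> A x) \/ (forall x, S x -> B x).

Definition zariski_component X S := [/\ zariski_closed S, zariski_irreducible S,
  (forall x, S x -> X x) &
  forall T, zariski_closed T -> zariski_irreducible T -> (forall x, T x -> X x) ->
    (forall x, S x -> T x) -> forall x, T x -> S x].

Definition vanishing S f := forall y, S y -> meval y f = 0.

Definition zariski_closure S x := forall f, vanishing S f -> meval x f = 0.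

Lemma zariski_closed_closure S : zariski_closed (zariski_closure S).
Proof. by exists (vanishing S). Qed.

Lemma subset_zariski_closure S x : S x -> zariski_closure S x.
Proof. by move=> Sx f; apply. Qed.

Lemma zariski_closure_min S Y : zariski_closed Y -> (forall x, S x -> Y x) ->
  forall x, zariski_closure S x -> Y x.
Proof. by move=> [F FY] SY x Sx; apply/FY => f Ff; apply: Sx => y /SY /FY; apply. Qed.

Lemma zariski_closedI A B : zariski_closed A -> zariski_closed B ->
  zariski_closed (fun x => A x /\ B x).
Proof.
move=> [FA FAP] [FB FBP]; exists (fun f => FA f \/ FB f) => x; rewrite FAP FBP.
split=> [[xA xB] f [/xA | /xB] // | xAB].
by split=> f Ff; apply: xAB; [left | right].
Qed.

Lemma zariski_closed_zero f : zariski_closed (fun x => meval x f = 0).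
Proof. by exists (eq f) => x; split=> [xf _ <- | ]; last apply. Qed.

Lemma zariski_closed_point x0 : zariski_closed (eq^~ x0).
Proof.
exists (fun f => exists i, f = 'X_i - (x0 i)%:MP) => x; split.
  by move=> -> f [i ->]; rewrite mevalB mevalC mevalXU subrr.
move=> x0P; apply: funext => i; apply/eqP; rewrite -subr_eq0.
by have := x0P _ (ex_intro _ i erefl); rewrite mevalB mevalC mevalXU => ->.
Qed.

Lemma vanishing_notin Y y : zariski_closed Y -> ~ Y y ->
  exists f, vanishing Y f /\ meval y f != 0.
Proof.
move=> [F FY] /FY /existsNP[f /not_implyP[Ff /eqP yf]].
by exists f; split=> // z /FY; apply.
Qed.

Lemma vanishingD S g f a : vanishing S g -> vanishing S f -> vanishing S (g + a *: f).
Proof. by move=> Sg Sf y Sy; rewrite mevalD mevalZ Sg // Sf // mulr0 addr0. Qed.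

End ZariskiTopology.

Section PermutedSets.
Variables (K : numClosedFieldType) (n : nat).
Implicit Types (Z : ('I_n -> K) -> Prop) (s : 'S_n).

Lemma zariski_closed_perm s Z : zariski_closed Z -> zariski_closed (Z \o perm_act s).
Proof.
move=> [F FZ]; exists (fun f => exists2 g, F g & f = msym (s^-1)%g g) => y /=.
rewrite FZ; split=> [yZ _ [g Fg ->] | yZ g Fg]; first by rewrite -meval_perm_act yZ.
by rewrite meval_perm_act; apply: yZ; exists g.
Qed.

Lemma zariski_irreducible_perm s Z : zariski_irreducible Z ->
  zariski_irreducible (Z \o perm_act s).
Proof.
move=> [[x Zx] Z_irr]; split; first by exists (perm_act (s^-1)%g x); rewrite /= perm_actVK.
move=> A B A_closed B_closed cover.
have [] := Z_irr (A \o perm_act (s^-1)%g) (B \o perm_act (s^-1)%g)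
  (zariski_closed_perm _ A_closed) (zariski_closed_perm _ B_closed).
- by move=> z Zz; apply: cover; rewrite /= perm_actVK.
- by move=> ZA; left => y /ZA /=; rewrite perm_actK.
- by move=> ZB; right => y /ZB /=; rewrite perm_actK.
Qed.

End PermutedSets.

Section InfiniteFibres.
Variables (K : numClosedFieldType) (n : nat).
Implicit Types (Y Z A B : ('I_n -> K) -> Prop) (c x y : 'I_n -> K) (g : {mpoly K[n]}).

Definition infinite_en Y := forall s : seq K, exists2 y, Y y & elem_sym n y \notin s.

Lemma finite_en_of_not_infinite Y : ~ infinite_en Y ->
  exists s : seq K, forall y, Y y -> elem_sym n y \in s.
Proof.
move=> /existsNP[s Ys]; exists s => y Yy; apply: contrapT => /negP ys.
by apply: Ys; exists y.
Qed.

Lemma infinite_en_split Y A B : infinite_en Y -> (forall x, Y x -> A x \/ B x) ->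
  infinite_en (fun x => A x /\ Y x) \/ infinite_en (fun x => B x /\ Y x).
Proof.
move=> Y_inf cover; have [|] := pselect (infinite_en (fun x => A x /\ Y x)); first by left.
move=> /finite_en_of_not_infinite[sA sAP].
right => s; have [y Yy] := Y_inf (sA ++ s); rewrite mem_cat negb_or => /andP[ysA ys].
exists y => //; split=> //; case: (cover y Yy) => // yA.
by rewrite sAP in ysA.
Qed.

Lemma infinite_en_sub Y Z : (forall x, Y x -> Z x) -> infinite_en Y -> infinite_en Z.
Proof. by move=> YZ Y_inf s; have [y /YZ Zy ys] := Y_inf s; exists y. Qed.

Lemma zariski_irreducible_closure (S : ('I_n -> K) -> Prop) : infinite_en S ->
  (forall Z, zariski_closed Z -> (forall x, Z x -> zariski_closure S x) -> infinite_en Z ->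
     forall x, S x -> Z x) ->
  zariski_irreducible (zariski_closure S).
Proof.
move=> S_inf S_dense; have S_cl := @subset_zariski_closure _ _ S.
split=> [|A B A_closed B_closed cover]; first by have [x /S_cl] := S_inf [::]; exists x.
have dense P : zariski_closed P -> infinite_en (fun x => P x /\ zariski_closure S x) ->
    forall x, zariski_closure S x -> P x.
  move=> P_closed P_inf; apply: zariski_closure_min => // x Sx.
  have PS_closed := zariski_closedI P_closed (zariski_closed_closure S).
  by case: (S_dense _ PS_closed (fun x => @proj2 _ _) P_inf x Sx).
case: (infinite_en_split (infinite_en_sub S_cl S_inf) cover) => [A_inf | B_inf].
  by left; apply: dense A_inf.
by right; apply: dense B_inf.
Qed.

Lemma infinite_en_perm s Z : infinite_en Z -> infinite_en (Z \o perm_act s).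
Proof.
move=> Z_inf l; have [y Zy yl] := Z_inf l.
by exists (perm_act (s^-1)%g y); rewrite /= ?perm_actVK // elem_sym_perm_act.
Qed.

Lemma zariski_closed_sym_curve c : zariski_closed (sym_curve c).
Proof.
exists (fun f => exists2 k, (1 <= k <= n.-1)%N & f = mesym n K k - (elem_sym k c)%:MP).
move=> x; split=> [xc f [k kn ->] | xP k kn].
  by rewrite mevalB mevalC -/(elem_sym k x) xc // subrr.
apply/eqP; rewrite -subr_eq0.
by have := xP _ (ex_intro2 _ _ k kn erefl); rewrite mevalB mevalC => ->.
Qed.

Lemma infinite_en_sym_curve c : (0 < n)%N -> infinite_en (sym_curve c).
Proof.
move=> n_gt0 s; have [mu mu_s] := exists_notin s.
by have [x xc xmu] := exists_sym_curve_en c mu n_gt0; exists x; rewrite ?xmu.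
Qed.

Lemma orbit_zeros_gt0_of_vanishing c Z g x :
  on_curve c Z -> infinite_en Z -> vanishing Z g ->
  sym_curve c x -> (0 < orbit_zeros g x)%N.
Proof.
move=> Zc Z_inf Zg xc; have [r [r_le [E EP]]] := exists_generic_zeros c g.
have [y Zy yE] := Z_inf E; have := orbit_zeros_gt0 (Zg y Zy).
by rewrite (EP y (Zc y Zy) yE) => /leq_trans; apply; apply: r_le.
Qed.

End InfiniteFibres.

Section CurveComponents.
Variables (K : numClosedFieldType) (n : nat) (c : 'I_n -> K).
Hypothesis n_gt0 : (0 < n)%N.
Implicit Types (S Y Z : ('I_n -> K) -> Prop) (x y : 'I_n -> K) (f g : {mpoly K[n]}).

Definition generic_zeros_on Y g r := [/\ zariski_closed Y, on_curve c Y, infinite_en Y,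
  vanishing Y g & generic_zeros c g r].

Lemma generic_zeros_on_min_dense Y g r (E : seq K) :
  generic_zeros_on Y g r ->
  (forall x, sym_curve c x -> elem_sym n x \notin E -> orbit_zeros g x = r) ->
  (forall Z g' r', generic_zeros_on Z g' r' -> (r <= r')%N) ->
  forall Z, zariski_closed Z -> (forall x, Z x -> Y x) -> infinite_en Z ->
  forall y, Y y -> elem_sym n y \notin E -> Z y.
Proof.
move=> [_ Yc _ Yg _] EP r_min Z Z_closed ZY Z_inf y Yy yE; apply: contrapT => Zy.
have [f [Zf yf]] := vanishing_notin Z_closed Zy.
have [a lt_r] : exists a, (orbit_zeros (g + a *: f) y < orbit_zeros g y)%N.
  by apply: (orbit_zeros_perturb (t0 := 1%g)); rewrite perm_act1 ?Yg.
have [r' gr'] := exists_generic_zeros c (g + a *: f).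
have : (r <= r')%N.
  apply: (r_min Z (g + a *: f)); split=> // [z /ZY /Yc // |].
  by apply: vanishingD => // z /ZY /Yg.
by move: (gr'.1 y (Yc y Yy)) lt_r; rewrite (EP y (Yc y Yy) yE); lia.
Qed.

Lemma exists_irreducible_infinite : exists D, [/\ zariski_closed D,
  zariski_irreducible D, on_curve c D & infinite_en D].
Proof.
have [r0 adm0] : exists r Y g, generic_zeros_on Y g r.
  have [r gr] := exists_generic_zeros c 0; exists r, (sym_curve c), 0; split=> //.
  - exact: zariski_closed_sym_curve.
  - exact: infinite_en_sym_curve.
  - by move=> y _; rewrite raddf0.
have [r /asboolP[Y [g gYr]] r_min] := ex_minnP
  (ex_intro (fun r => `[< exists Y g, generic_zeros_on Y g r >]) r0 (asboolT adm0)).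
have [Y_closed Yc Y_inf _ [_ [E EP]]] := gYr.
pose S y := Y y /\ elem_sym n y \notin E.
have clSY := zariski_closure_min Y_closed (fun y (Sy : S y) => Sy.1).
have S_inf : infinite_en S.
  move=> s; have [y Yy] := Y_inf (s ++ E); rewrite mem_cat negb_or => /andP[ys yE].
  by exists y.
exists (zariski_closure S); split.
- exact: zariski_closed_closure.
- apply: zariski_irreducible_closure => // Z Z_closed ZS Z_inf y [Yy yE].
  apply: (generic_zeros_on_min_dense gYr EP) => // [Z' g' r' gZ' | z /ZS /clSY //].
  by apply: r_min; apply/asboolP; exists Z', g'.
- by move=> y /clSY /Yc.
- exact: infinite_en_sub (@subset_zariski_closure _ _ S) S_inf.
Qed.

Lemma meets_every_fibre Z x0 : zariski_closed Z -> on_curve c Z -> infinite_en Z ->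
  sym_curve c x0 -> exists s, Z (perm_act s x0).
Proof.
move=> Z_closed Zc Z_inf x0c; apply: contrapT => /forallNP Z_out.
pose admissible m := exists g, vanishing Z g /\ orbit_zeros g x0 = m.
have adm0 : admissible (orbit_zeros 0 x0) by exists 0; split=> // y _; rewrite raddf0.
have [_ /asboolP[g [Zg <-]] m_min] :=
  ex_minnP (ex_intro (fun m => `[< admissible m >]) _ (asboolT adm0)).
have /card_gt0P[t] := orbit_zeros_gt0_of_vanishing Zc Z_inf Zg x0c.
rewrite inE => /eqP gt; have [f [Zf ft]] := vanishing_notin Z_closed (Z_out t).
have [a] := orbit_zeros_perturb gt ft; rewrite ltnNge m_min //.
by apply/asboolP; exists (g + a *: f); split=> //; apply: vanishingD.
Qed.

Lemma exists_irreducible_through x0 : sym_curve c x0 -> exists T, [/\ zariski_closed T,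
  zariski_irreducible T, on_curve c T, infinite_en T & T x0].
Proof.
move=> x0c; have [D [D_closed D_irr Dc D_inf]] := exists_irreducible_infinite.
have [s Ds] := meets_every_fibre D_closed Dc D_inf x0c.
exists (D \o perm_act s); split=> //.
- exact: zariski_closed_perm.
- exact: zariski_irreducible_perm.
- by move=> y /Dc /sym_curve_perm_act.
- exact: infinite_en_perm.
Qed.

Lemma exists_isolating_poly x0 (s : seq K) : sym_curve c x0 -> exists g,
  meval x0 g != 0 /\
  forall y, sym_curve c y -> elem_sym n y \in s -> y <> x0 -> meval y g = 0.
Proof.
move=> x0c; pose moved t i := x0 i != perm_act t x0 i.
(* [F] vanishes on the fibres over [s] other than that of [x0], [G] on the rest of the
   orbit of [x0]. *)
pose F := \prod_(mu <- s | mu != elem_sym n x0) (mesym n K n - mu%:MP).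
pose G := \prod_(t : 'S_n) \prod_(i | moved t i) ('X_i - (perm_act t x0 i)%:MP).
have FE y : meval y F = \prod_(mu <- s | mu != elem_sym n x0) (elem_sym n y - mu).
  by rewrite rmorph_prod /=; apply: eq_bigr => mu _; rewrite mevalB mevalC.
have GE y : meval y G = \prod_(t : 'S_n) \prod_(i | moved t i) (y i - perm_act t x0 i).
  rewrite rmorph_prod /=; apply: eq_bigr => t _; rewrite rmorph_prod /=; apply: eq_bigr => i _.
  by rewrite mevalB mevalC mevalXU.
exists (F * G); split=> [|y yc ys y_x0]; rewrite mevalM FE GE.
  rewrite mulf_neq0 //.
    by rewrite prodf_seq_neq0; apply/allP => mu _; apply/implyP; rewrite subr_eq0 eq_sym.
  by apply/prodf_neq0 => t _; apply/prodf_neq0 => i; rewrite subr_eq0.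
apply/eqP; rewrite mulf_eq0; have [e | ne] := eqVneq (elem_sym n x0) (elem_sym n y).
  have [t yE] := sym_curve_fibre x0c yc e; subst y.
  have [i moved_i] : exists i, moved t i.
    apply: contrapT => /forallNP fixed; apply: y_x0; apply: funext => i.
    by apply/eqP; rewrite eq_sym; apply: contrapT => /negP; apply: fixed.
  apply/orP; right; apply/prodf_eq0; exists t => //.
  by apply/prodf_eq0; exists i; rewrite ?subrr.
apply/orP; left; rewrite prodf_seq_eq0; apply/hasP; exists (elem_sym n y) => //.
by rewrite eq_sym ne subrr /=.
Qed.

Lemma irreducible_finite_en_point C0 x0 : zariski_irreducible C0 -> on_curve c C0 ->
  C0 x0 -> ~ infinite_en C0 -> forall y, C0 y -> y = x0.
Proof.
move=> [_ C0_irr] C0c C0x0 /finite_en_of_not_infinite[s sP].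
have [g [gx0 gP]] := exists_isolating_poly s (C0c x0 C0x0).
have [] // := C0_irr (eq^~ x0) (fun y => meval y g = 0) (zariski_closed_point x0)
  (zariski_closed_zero g).
  move=> y C0y; have [-> | y_x0] := pselect (y = x0); first by left.
  by right; apply: gP => //; [apply: C0c | apply: sP].
by move=> /(_ x0 C0x0) /eqP; rewrite (negPf gx0).
Qed.

Lemma component_infinite_en C0 : zariski_component (sym_curve c) C0 -> infinite_en C0.
Proof.
move=> [C0_closed C0_irr C0c C0_max]; apply: contrapT => C0_fin.
have [x0 C0x0] := C0_irr.1.
have C0_point := irreducible_finite_en_point C0_irr C0c C0x0 C0_fin.
have [T [T_closed T_irr Tc T_inf Tx0]] := exists_irreducible_through (C0c x0 C0x0).
have TC0 := C0_max T T_closed T_irr Tc (fun y C0y => eq_ind_r T Tx0 (C0_point y C0y)).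
by apply: C0_fin; apply: infinite_en_sub TC0 T_inf.
Qed.

End CurveComponents.

Section ConeArgument.
Variables (K : numClosedFieldType) (n : nat) (c : 'I_n -> K).
Hypothesis n_gt0 : (0 < n)%N.
Implicit Types (y w : 'I_n -> K) (g : {mpoly K[n]}).

Definition scale_pt (u : K) y : 'I_n -> K := fun i => u * y i.

Lemma elem_sym_scale k u y : elem_sym k (scale_pt u y) = u ^+ k * elem_sym k y.
Proof.
rewrite /elem_sym /mesym !rmorph_sum /= mulr_sumr; apply: eq_bigr => h /eqP hk.
rewrite !rmorph_prod /= -hk -prodrMl; apply: eq_bigr => i _.
by rewrite !mevalXU.
Qed.

Definition linear_form (b : 'I_n -> K) : {mpoly K[n]} := \sum_i b i *: 'X_i.

Lemma meval_linear_form b y : meval y (linear_form b) = \sum_i b i * y i.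
Proof. by rewrite rmorph_sum /=; apply: eq_bigr => i _; rewrite mevalZ mevalXU. Qed.

Lemma linear_form_cone b u y :
  meval y (linear_form b) = 0 -> meval (scale_pt u y) (linear_form b) = 0.
Proof.
rewrite !meval_linear_form => y0; transitivity (u * \sum_i b i * y i).
  by rewrite mulr_sumr; apply: eq_bigr => i _; rewrite mulrCA.
by rewrite y0 mulr0.
Qed.

Lemma orbit_zeros_gt0_cone g w :
  (forall u y, meval y g = 0 -> meval (scale_pt u y) g = 0) ->
  (forall y, sym_curve c y -> (0 < orbit_zeros g y)%N) ->
  (forall k, (1 <= k < n)%N -> elem_sym k w = 0) ->
  (0 < orbit_zeros g w)%N.
Proof.
move=> g_cone g_curve w0.
have [q qP] := coef_orbit_poly_elem_sym g 0.
pose P (i : 'I_n) : {poly K} :=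
  if i.+1 == n then (elem_sym n w)%:P else elem_sym i.+1 c *: 'X^(i.+1).
(* [h.[u]] is the constant coefficient of the orbit polynomial at [u y] for [y] on the
   curve with [e_n y = e_n w / u ^+ n]; at [u = 0] it is the one at [w]. *)
have [h hP] := exists_poly_meval_horner q P.
suff h0 : h = 0.
  rewrite -coef0_orbit_poly_eq0 qP; have := hP 0; rewrite h0 horner0 => ->.
  apply/eqP; apply: meval_eq => i; rewrite /P; case: eqP => [e | ne].
    by rewrite hornerC e.
  rewrite hornerZ hornerXn expr0n /= mulr0; apply: w0.
  by rewrite /= ltn_neqAle ltn_ord andbT; apply/eqP.
apply: poly_eq0_of_roots => s; have [u] := exists_notin (0 :: s).
rewrite inE negb_or => /andP[u0 us]; exists u => //.
have [y yc ey] := exists_sym_curve_en c (elem_sym n w / u ^+ n) n_gt0.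
have : (0 < orbit_zeros g (scale_pt u y))%N.
  have /card_gt0P[t] := g_curve y yc; rewrite !inE => /eqP gt.
  by apply/card_gt0P; exists t; rewrite inE (g_cone u _ gt).
rewrite -coef0_orbit_poly_eq0 qP hP => /eqP <-; apply: meval_eq => i.
rewrite /P elem_sym_scale; case: eqP => [e | ne].
  by rewrite hornerC e ey mulrC divfK // expf_neq0.
rewrite hornerZ hornerXn yc 1?mulrC //.
by rewrite /= -ltnS prednK // ltn_neqAle ltn_ord andbT; apply/eqP.
Qed.

End ConeArgument.

Section LinearSeparation.
Variables (K : numClosedFieldType) (n : nat).
Implicit Types (S : ('I_n -> K) -> Prop) (u : 'I_n -> K).

Definition in_span S u := exists m (y : 'I_m -> 'I_n -> K) (a : 'I_m -> K),
  (forall l, S (y l)) /\ forall j, u j = \sum_(l < m) a l * y l j.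

Definition rowv u : 'rV[K]_n := \row_i u i.

Definition rows_mx m (y : 'I_m -> 'I_n -> K) : 'M[K]_(m, n) := \matrix_(l, i) y l i.

Lemma exists_spanning_rows S : exists m (y : 'I_m -> 'I_n -> K),
  (forall l, S (y l)) /\ forall u, S u -> (rowv u <= rows_mx y)%MS.
Proof.
pose P r := exists m (y : 'I_m -> 'I_n -> K), (forall l, S (y l)) /\ \rank (rows_mx y) = r.
have P0 : P 0%N.
  by exists 0%N, (fun _ _ => 0); split=> [[] // | ]; rewrite [rows_mx _]flatmx0 mxrank0.
have P_le r : `[< P r >] -> (r <= n)%N by move=> /asboolP[m [y [_ <-]]]; apply: rank_leq_col.
have [_ /asboolP[m [y [Sy <-]]] r_max] := ex_maxnP (ex_intro _ 0%N (asboolT P0)) P_le.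
exists m, y; split=> // u Su.
pose y' (l : 'I_(m + 1)) := if split l is inl l' then y l' else u.
have y'E : rows_mx y' = col_mx (rows_mx y) (rowv u).
  by apply/matrixP => l i; rewrite /y' !mxE; case: (split l) => a; rewrite !mxE.
have rank_le : (\rank (rows_mx y + rowv u) <= \rank (rows_mx y))%N.
  rewrite addsmxE -y'E; apply: r_max; apply/asboolP; exists (m + 1)%N, y'; split=> //.
  by move=> l; rewrite /y'; case: (split l).
have [_ /esym] := mxrank_leqif_sup (addsmxSl (rows_mx y) (rowv u)).
by rewrite eqn_leq rank_le mxrankS ?addsmxSl // addsmx_sub => /andP[].
Qed.

Lemma in_span_rows S m (y : 'I_m -> 'I_n -> K) u :
  (forall l, S (y l)) -> (rowv u <= rows_mx y)%MS -> in_span S u.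
Proof.
move=> Sy /submxP[a ua]; exists m, y, (fun l => a 0 l); split=> // j.
have := congr1 (fun r : 'rV_n => r 0 j) ua; rewrite !mxE => ->.
by apply: eq_bigr => l _; rewrite !mxE.
Qed.

Lemma exists_col_avoiding (I : finType) (r : I -> 'rV[K]_n) :
  (forall i, r i != 0) -> exists a : 'cV[K]_n, forall i, r i *m a != 0.
Proof.
move=> r_neq0; pose P i : {poly K} := \sum_(j < n) r i 0 j *: 'X^j.
have P_neq0 i : P i != 0.
  apply: contra_neq (r_neq0 i) => Pi0; apply/matrixP => k j; rewrite (ord1 k) mxE.
  have := congr1 (fun p : {poly K} => p`_j) Pi0.
  by rewrite coef0 coef_sumMXn (big_pred1 j) // => l /=; rewrite val_eqE.
have /poly_finite_roots[rs rsP] : \prod_i P i != 0 by apply/prodf_neq0 => i _.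
have [t /rsP] := exists_notin rs; rewrite horner_prod => /prodf_neq0 Pt.
exists (\col_j t ^+ j) => i; apply: contra_neq (Pt i isT) => ra0.
have := congr1 (fun M : 'M_1 => M 0 0) ra0; rewrite !mxE => <-.
by rewrite horner_sum; apply: eq_bigr => j _; rewrite hornerZ hornerXn mxE.
Qed.

Lemma exists_separating_form S (I : finType) (w : I -> 'I_n -> K) :
  (forall i, ~ in_span S (w i)) -> exists b : 'I_n -> K,
    (forall y, S y -> \sum_j b j * y j = 0) /\ forall i, \sum_j b j * w i j != 0.
Proof.
move=> w_out; have [m [y [Sy S_rows]]] := exists_spanning_rows S.
pose C := cokermx (rows_mx y).
have [a aP] : exists a : 'cV[K]_n, forall i, rowv (w i) *m C *m a != 0.
  apply: exists_col_avoiding => i; rewrite -submxE; apply/negP.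
  by move/(in_span_rows Sy); apply: w_out.
have formE u : \sum_j (C *m a) j 0 * u j = (rowv u *m C *m a) 0 0.
  by rewrite -mulmxA mxE; apply: eq_bigr => j _; rewrite [rowv u 0 j]mxE mulrC.
exists (fun j => (C *m a) j 0); split=> [u /S_rows | i]; rewrite formE.
  by rewrite submxE => /eqP ->; rewrite mul0mx mxE.
apply: contra_neq (aP i) => wa0; apply/matrixP => k l.
by rewrite (ord1 k) (ord1 l) wa0 mxE.
Qed.

End LinearSeparation.

Lemma elem_sym_primitive_powers (K : numClosedFieldType) n (z : K) k :
  n.-primitive_root z -> (1 <= k < n)%N -> elem_sym k (fun j : 'I_n => z ^+ j.+1) = 0.
Proof.
move=> z_prim /andP[k_gt0 k_lt_n].
have : root_poly (fun j : 'I_n => z ^+ j.+1) = 'X^n - 1.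
  rewrite /root_poly big_tuple -(factor_Xn_sub_1 z_prim) big_mkord.
  under eq_bigr => i _ do rewrite tnth_mktuple.
  case: n z_prim {k_lt_n} => [|n] z_prim; first by rewrite !big_ord0.
  rewrite big_ord_recr big_ord_recl /= mulrC (prim_expr_order z_prim) expr0.
  by congr (_ * _); apply: eq_bigr => i _.
have nk_n : (n - k)%N != n by move: k_gt0 k_lt_n; lia.
have nk_0 : (n - k)%N != 0%N by rewrite subn_eq0 -ltnNge.
move/(congr1 (fun q : {poly K} => q`_(n - k))).
rewrite (coef_root_poly _ (ltnW k_lt_n)) coefB coefXn coef1 (negPf nk_n) (negPf nk_0) subrr.
by move/eqP; rewrite mulf_eq0 signr_eq0 => /eqP.
Qed.

Section Zeta.
Variables (R : realType) (p : nat).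
Hypothesis p_prime : prime p.
Local Open Scope complex_scope.

Let theta : R := 2 * pi / p%:R.

Lemma zeta_expr k : zeta R p ^+ k = cos (k%:R * theta) +i* sin (k%:R * theta).
Proof.
elim: k => [|k IH]; first by rewrite expr0 mul0r cos0 sin0.
rewrite exprS IH /zeta -/theta -[k.+1]addn1 natrD mulrDl mul1r addrC cosD sinD.
by apply/eqP; rewrite eq_complex /=; apply/andP; split; apply/eqP; ring.
Qed.

Lemma zeta_order : zeta R p ^+ p = 1.
Proof.
rewrite zeta_expr /theta mulrC divfK ?pnatr_eq0 -?lt0n ?prime_gt0 //.
by rewrite mulr_natl cos2pi sin2pi.
Qed.

Lemma zeta_neq1 : zeta R p != 1.
Proof.
apply/negP; rewrite /zeta eq_complex /= => /andP[/eqP cos1 /eqP sin0].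
have [p_gt2 | p_eq2] : (2 < p)%N \/ p = 2%N.
  by have := prime_gt1 p_prime; rewrite leq_eqVlt => /orP[/eqP <-|]; [right | left].
  have : 0 < sin (2 * pi / p%:R : R); last by rewrite sin0 ltxx.
  apply: sin_gt0_pi; rewrite divr_gt0 ?mulr_gt0 ?pi_gt0 ?ltr0n ?prime_gt0 //=.
  by rewrite ltr_pdivrMr ?ltr0n ?prime_gt0 // mulrC ltr_pM2l ?pi_gt0 // ltr_nat.
by move: cos1; rewrite p_eq2 [2 * pi]mulrC mulfK ?pnatr_eq0 // cospi; lra.
Qed.

Lemma zeta_primitive : p.-primitive_root (zeta R p).
Proof.
have [m m_prim m_dvd] := prim_order_exists (prime_gt0 p_prime) zeta_order.
case/primeP: p_prime => _ /(_ m m_dvd) /orP[/eqP m1 | /eqP m_p]; last by move: m_prim; rewrite m_p.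
by move: m_prim; rewrite m1 => /prim_expr_order; rewrite expr1 => /eqP; rewrite (negPf zeta_neq1).
Qed.

End Zeta.

Theorem corollary3p5 (R : realType) (p : nat) (v : 'I_p -> R)
  (C0 : ('I_p -> R[i]) -> Prop) :
  prime p ->
  injective v ->
  irr_component (elem_sym_curve v) C0 ->
  exists s : 'S_p, in_cspan C0 (perm_act s (wvec R p)).
Proof.
(* [irr_component],
   [elem_sym_curve] and [in_cspan] are [zariski_component], [sym_curve] and [in_span]
   at [K = R[i]]. *)
move=> p_prime _ C0_comp; have p_gt0 := prime_gt0 p_prime.
pose c i := ((v i)%:C)%C.
have C0_inf : infinite_en C0 := component_infinite_en (c := c) p_gt0 C0_comp.
have [_ _ C0c _] := C0_comp.
apply: contrapT => /forallNP w_out.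
have [b [b_C0 b_w]] := exists_separating_form (w := fun s => perm_act s (wvec R p)) w_out.
have l_C0 : vanishing C0 (linear_form b) by move=> y /b_C0; rewrite meval_linear_form.
have /card_gt0P[t] := orbit_zeros_gt0_cone (c := c) p_gt0 (@linear_form_cone _ _ b)
  (fun y => orbit_zeros_gt0_of_vanishing C0c C0_inf l_C0)
  (fun k => elem_sym_primitive_powers (k := k) (zeta_primitive R p_prime)).
by rewrite inE meval_linear_form => /eqP; apply/eqP/b_w.
Qed.
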